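(* Let $(X,d)$ be a compact metric space with $\dim X=0$ and let $f\in\mathcal{H}(X)$ be equicontinuous. Then $\lim_{\delta\to0}r(\delta)=0$.
   Context: $f$ is equicontinuous if for every $\epsilon>0$ there is $\eta>0$ such that $d(x,y)\le\eta$ implies $\sup_{i\in\mathbb{Z}}d(f^i(x),f^i(y))\le\epsilon$; such $f$ satisfies $X=CR(f)$ (every point is chain recurrent). A $\delta$-chain is a finite sequence $(x_i)_{i=0}^k$, $k\ge1$, with $d(f(x_i),x_{i+1})\le\delta$; a $\delta$-cycle is a $\delta$-chain with $x_0=x_k$, of length $k$. For $f$ with $X=CR(f)$ and $\delta>0$: $x\sim_\delta y$ iff there are $\delta$-chains from $x$ to $y$ and from $y$ to $x$; this is an equivalence relation whose classes ($\delta$-chain components) are finitely many, clopen and $f$-invariant. For a $\delta$-chain component $C$, let $m$ be the gcd of the lengths of all $\delta$-cycles lying in $C$; define $x\sim_{\delta,m}y$ for $x,y\in C$ iff there is a $\delta$-chain from $x$ to $y$ whose length is divisible by $m$. This is an equivalence relation on $C$ with exactly $m$ classes (the $\delta$-cyclic components of $C$), each clopen. $r(\delta)$ denotes the maximum of the diameters of all $\delta$-cyclic components of all $\delta$-chain components of $X$. *)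

From Stdlib Require Import Reals ZArith Arith List.
Open Scope R_scope.

Section Defs.
Variable X : Type.
Variable d : X -> X -> R.

Definition is_metric : Prop :=
  (forall x y, 0 <= d x y) /\
  (forall x y, d x y = 0 <-> x = y) /\
  (forall x y, d x y = d y x) /\
  (forall x y z, d x z <= d x y + d y z).

Definition is_open (U : X -> Prop) : Prop :=
  forall x, U x -> exists e, 0 < e /\ forall y, d x y < e -> U y.

Definition is_closed (U : X -> Prop) : Prop :=
  is_open (fun x => ~ U x).

Definition is_clopen (U : X -> Prop) : Prop := is_open U /\ is_closed U.

Definition is_compact : Prop :=
  forall (I : Type) (U : I -> X -> Prop),
    (forall i, is_open (U i)) ->
    (forall x, exists i, U i x) ->
    exists l : list I, forall x, exists i, In i l /\ U i x.

(* dim X = 0 (small inductive dimension zero): every point has arbitrarily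
   small clopen neighbourhoods, i.e. X has a base of clopen sets. *)
Definition zero_dim : Prop :=
  forall x e, 0 < e ->
    exists U, is_clopen U /\ U x /\ forall y, U y -> d x y < e.

Definition continuous (f : X -> X) : Prop :=
  forall x e, 0 < e -> exists h, 0 < h /\ forall y, d x y < h -> d (f x) (f y) < e.

Definition homeo_with_inverse (f g : X -> X) : Prop :=
  continuous f /\ continuous g /\
  (forall x, f (g x) = x) /\ (forall x, g (f x) = x).

Fixpoint iter (n : nat) (h : X -> X) (x : X) : X :=
  match n with O => x | S n' => h (iter n' h x) end.

Definition zpow (f g : X -> X) (i : Z) : X -> X :=
  match i with
  | Z0 => fun x => x
  | Zpos p => iter (Pos.to_nat p) f
  | Zneg p => iter (Pos.to_nat p) g
  end.

Definition equicontinuous (f g : X -> X) : Prop :=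
  forall e, 0 < e -> exists h, 0 < h /\
    forall x y, d x y <= h -> forall i : Z, d (zpow f g i x) (zpow f g i y) <= e.

Variable f : X -> X.

Definition chain (delta : R) (k : nat) (x y : X) : Prop :=
  (1 <= k)%nat /\
  exists c : nat -> X, c O = x /\ c k = y /\
    forall i, (i < k)%nat -> d (f (c i)) (c (S i)) <= delta.

Definition chain_equiv (delta : R) (x y : X) : Prop :=
  (exists k, chain delta k x y) /\ (exists k, chain delta k y x).

Definition cycle_in (delta : R) (x : X) (k : nat) : Prop :=
  (1 <= k)%nat /\
  exists c : nat -> X, c O = c k /\
    (forall i, (i < k)%nat -> d (f (c i)) (c (S i)) <= delta) /\
    (forall i, (i <= k)%nat -> chain_equiv delta x (c i)).

Definition cycle_gcd (delta : R) (x : X) (m : nat) : Prop :=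
  (forall k, cycle_in delta x k -> Nat.divide m k) /\
  (forall m', (forall k, cycle_in delta x k -> Nat.divide m' k) -> Nat.divide m' m).

Definition cyclic_equiv (delta : R) (x y : X) : Prop :=
  chain_equiv delta x y /\
  exists m, cycle_gcd delta x m /\
    exists k, chain delta k x y /\ Nat.divide m k.

(* rd is r(delta): the supremum of d(x,y) over pairs x,y in a common
   delta-cyclic component, i.e. the max of the diameters of all
   delta-cyclic components *)
Definition is_r (delta rd : R) : Prop :=
  is_lub (fun v => exists x y, cyclic_equiv delta x y /\ v = d x y) rd.

End Defs.

From Pilot Require Import Defs.
From Stdlib Require Import Reals ZArith Arith List.
From Stdlib Require Import Lra Lia Classical Wf_nat RelationClasses.
Open Scope R_scope.

(* Fix eps > 0.
   1. Compactness and zero-dimensionality give a finite clopen partition of X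
      into cells of diameter < eps/2; as an equivalence relation S it has a
      Lebesgue number lam: points closer than lam lie in the same cell.
   2. Equicontinuity gives h > 0 such that h-close points have all forward
      iterates lam-close.  Hence the relation E a b := "f^n a and f^n b lie in
      the same S-cell for every n" is an f-invariant equivalence relation
      containing all h-close pairs.
   3. For delta <= h, a delta-chain of length k from a to b forces
      E (f^k a) b.  Consequently the return times R = {n | E x (f^n x)} form a
      subgroup of N (closed under + and -), i.e. R = pN for some p, and every
      delta-cycle length in the component of x lies in R.  So p divides the
      cycle gcd m, and a chain of length divisible by m from x to y yields
      E x y; in particular d x y < eps/2.
   4. Thus every delta-cyclic component has diameter <= eps/2 whenever
      delta < h, so 0 <= r(delta) <= eps/2 < eps. *)

Lemma nat_subgroup_multiples (P : nat -> Prop) (P0 : P O)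
  (Padd : forall a b, P a -> P b -> P (a + b)%nat)
  (Psub : forall a b, P a -> P b -> (b <= a)%nat -> P (a - b)%nat) :
  exists p, forall n, P n <-> Nat.divide p n.
Proof.
  assert (Pmul : forall p q, P p -> P (q * p)%nat)
    by (intros p q Pp; induction q as [|q IH]; simpl; auto).
  destruct (classic (exists n, (1 <= n)%nat /\ P n)) as [Hpos|Hnone].
  - destruct (dec_inh_nat_subset_has_unique_least_element _
                (fun n => classic _) Hpos) as [p [[[Hp1 Pp] Hleast] _]].
    exists p; intro n; split.
    + intro Pn.
      assert (Prem : P (n mod p)%nat).
      { rewrite (Nat.Div0.mod_eq n p). apply Psub; auto.
        rewrite Nat.mul_comm. apply Pmul, Pp.
        pose proof (Nat.Div0.mul_div_le n p); lia. }
      destruct (Nat.eq_dec (n mod p) 0) as [Hz|Hnz].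
      * apply Nat.Lcm0.mod_divide, Hz.
      * assert (Hrem_pos : (1 <= n mod p)%nat) by lia.
        pose proof (Hleast _ (conj Hrem_pos Prem)).
        pose proof (Nat.mod_upper_bound n p); lia.
    + intros [q ->]. apply Pmul, Pp.
  - exists O; intro n; split.
    + intro Pn. destruct n as [|n]; [apply Nat.divide_refl|].
      exfalso. apply Hnone. exists (S n). split; [lia|exact Pn].
    + intros [q Hq]. rewrite Hq, Nat.mul_0_r. exact P0.
Qed.

(* If every element of a set lies in [0, b], so does its least upper bound
   (the set cannot be empty, since the empty set has no least upper bound). *)
Lemma lub_between (A : R -> Prop) (s b : R) :
  is_lub A s -> (forall v, A v -> 0 <= v <= b) -> 0 <= s <= b.
Proof.
  intros [Hub Hleast] Hbound. split.
  - destruct (classic (exists v, A v)) as [[v Av]|Hempty].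
    + specialize (Hbound v Av). specialize (Hub v Av). lra.
    + enough (s <= s - 1) by lra.
      apply Hleast. intros v Av. exfalso. eauto.
  - apply Hleast. intros v Av. apply Hbound, Av.
Qed.

Section Metric.
Variable X : Type.
Variable d : X -> X -> R.
Hypothesis hmet : is_metric X d.

Lemma dist_nonneg a b : 0 <= d a b.
Proof. apply (proj1 hmet). Qed.
Lemma dist_refl a : d a a = 0.
Proof. apply (proj1 (proj2 hmet)); reflexivity. Qed.
Lemma dist_sym a b : d a b = d b a.
Proof. apply (proj1 (proj2 (proj2 hmet))). Qed.
Lemma dist_triangle a b c : d a c <= d a b + d b c.
Proof. apply (proj2 (proj2 (proj2 hmet))). Qed.

Lemma clopen_list_locally_constant (l : list (X -> Prop)) :
  (forall U, In U l -> is_clopen X d U) ->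
  forall z, exists e, 0 < e /\
    forall w, d z w < e -> forall U, In U l -> (U z <-> U w).
Proof.
  intros Hclopen z. induction l as [|U l IH].
  - exists 1. split; [lra|]. intros w _ V [].
  - destruct IH as [e1 [He1 Hrest]]; [intros; apply Hclopen; right; auto|].
    destruct (Hclopen U (or_introl eq_refl)) as [HUopen HUclosed].
    assert (HU : exists e, 0 < e /\ forall w, d z w < e -> (U z <-> U w)).
    { destruct (classic (U z)) as [Uz|nUz].
      - destruct (HUopen z Uz) as [e [He Hball]].
        exists e. split; [exact He|]. intros w Hw. split; auto.
      - destruct (HUclosed z nUz) as [e [He Hball]].
        exists e. split; [exact He|]. intros w Hw. split; [tauto|].
        intro Uw. exfalso. exact (Hball w Hw Uw). }
    destruct HU as [e2 [He2 HUz]].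
    exists (Rmin e1 e2). split; [apply Rmin_pos; lra|].
    intros w Hw V [<-|HV].
    + apply HUz. eapply Rlt_le_trans; [exact Hw|apply Rmin_r].
    + apply Hrest; auto. eapply Rlt_le_trans; [exact Hw|apply Rmin_l].
Qed.

Hypothesis hcpt : is_compact X d.

Lemma lebesgue_number (P : X -> X -> Prop) (HP : Equivalence P)
  (Ploc : forall z, exists e, 0 < e /\ forall w, d z w < e -> P z w) :
  exists lam, 0 < lam /\ forall a b, d a b < lam -> P a b.
Proof.
  set (I := {p : X * R | 0 < snd p /\ forall w, d (fst p) w < snd p -> P (fst p) w}).
  destruct (hcpt I (fun p y => d (fst (proj1_sig p)) y < snd (proj1_sig p) / 2))
    as [l Hcover].
  - intros [[z e] [He Hz]] y Hy; simpl in *.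
    exists (e / 2 - d z y). split; [lra|].
    intros w Hw. pose proof (dist_triangle z y w). lra.
  - intro x. destruct (Ploc x) as [e [He Hx]].
    exists (exist _ (x, e) (conj He Hx)). simpl. rewrite dist_refl. lra.
  - assert (Hmin : exists lam, 0 < lam /\
                     forall p, In p l -> lam <= snd (proj1_sig p) / 2).
    { clear Hcover. induction l as [|[[z e] [He Hz]] l IH].
      - exists 1. split; [lra|]. intros p [].
      - destruct IH as [lam [Hlam Hle]]. simpl in He.
        exists (Rmin lam (e / 2)). split; [apply Rmin_pos; lra|].
        intros q [<-|Hq]; [apply Rmin_r|].
        eapply Rle_trans; [apply Rmin_l|auto]. }
    destruct Hmin as [lam [Hlam Hle]]. exists lam. split; [exact Hlam|].
    intros a b Hab. destruct (Hcover a) as [p [Hin Ha]]. specialize (Hle _ Hin).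
    destruct p as [[z e] [He Hz]]; simpl in *.
    transitivity z.
    + symmetry. apply Hz. lra.
    + apply Hz. pose proof (dist_triangle z a b). lra.
Qed.

Lemma fine_clopen_partition (hdim : zero_dim X d) eps : 0 < eps ->
  exists S : X -> X -> Prop, Equivalence S /\
    (forall a b, S a b -> d a b < eps) /\
    exists lam, 0 < lam /\ forall a b, d a b < lam -> S a b.
Proof.
  intro Heps.
  set (I := {U : X -> Prop | is_clopen X d U /\ forall a b, U a -> U b -> d a b < eps}).
  destruct (hcpt I (fun U => proj1_sig U)) as [l Hcover].
  - intros [U [[Hopen Hclosed] Hdiam]]; exact Hopen.
  - intro x. destruct (hdim x (eps / 2)) as [U [HU [Ux Hsmall]]]; [lra|].
    assert (Hdiam : forall a b, U a -> U b -> d a b < eps).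
    { intros a b Ua Ub. pose proof (dist_triangle a x b) as Htri.
      rewrite (dist_sym a x) in Htri. pose proof (Hsmall a Ua). pose proof (Hsmall b Ub).
      lra. }
    exists (exist _ U (conj HU Hdiam)). exact Ux.
  - set (L := map (@proj1_sig _ _) l).
    set (S := fun a b => forall U, In U L -> (U a <-> U b)).
    assert (HS : Equivalence S).
    { split.
      - intros a U _. tauto.
      - intros a b H U HU. specialize (H U HU). tauto.
      - intros a b c H1 H2 U HU. specialize (H1 U HU). specialize (H2 U HU). tauto. }
    exists S. split; [exact HS|split].
    + intros a b Hab. destruct (Hcover a) as [U [HU Ua]].
      apply (proj2 (proj2_sig U)); auto.
      apply (Hab (proj1_sig U)); auto. apply in_map, HU.
    + apply lebesgue_number; [exact HS|].
      apply clopen_list_locally_constant.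
      intros U HU. apply in_map_iff in HU. destruct HU as [p [<- _]].
      apply (proj1 (proj2_sig p)).
Qed.

End Metric.

Section Dynamics.
Variable X : Type.
Variable d : X -> X -> R.
Variable f : X -> X.

Local Notation fiter n := (Defs.iter X n f).

Lemma iter_add a b x : fiter (a + b) x = fiter a (fiter b x).
Proof. induction a as [|a IH]; simpl; congruence. Qed.

Lemma zpow_of_nat g n x : zpow X f g (Z.of_nat n) x = fiter n x.
Proof. destruct n; simpl; [reflexivity|]. rewrite SuccNat2Pos.id_succ. reflexivity. Qed.

Lemma equicontinuous_forward g (heq : equicontinuous X d f g) lam : 0 < lam ->
  exists h, 0 < h /\ forall a b, d a b <= h -> forall n, d (fiter n a) (fiter n b) < lam.
Proof.
  intro Hlam. destruct (heq (lam / 2)) as [h [Hh Hclose]]; [lra|].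
  exists h. split; [exact Hh|]. intros a b Hab n.
  specialize (Hclose a b Hab (Z.of_nat n)). rewrite !zpow_of_nat in Hclose. lra.
Qed.

Definition orbit_rel (S : X -> X -> Prop) (a b : X) : Prop :=
  forall n, S (fiter n a) (fiter n b).

Lemma orbit_rel_equivalence S : Equivalence S -> Equivalence (orbit_rel S).
Proof.
  intro HS. split.
  - intros a n. reflexivity.
  - intros a b H n. symmetry. apply H.
  - intros a b c H1 H2 n. transitivity (fiter n b); auto.
Qed.

Lemma orbit_rel_invariant S a b : orbit_rel S a b -> orbit_rel S (f a) (f b).
Proof. intros H n. rewrite <- !(iter_add n 1). apply H. Qed.

(* E is an f-invariant equivalence relation containing every pair of
   h-close points; the application takes E := orbit_rel S. *)
Variable E : X -> X -> Prop.
Hypothesis E_equiv : Equivalence E.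
Hypothesis E_invariant : forall a b, E a b -> E (f a) (f b).
Variable h : R.
Hypothesis E_close : forall a b, d a b <= h -> E a b.

Lemma E_iter n a b : E a b -> E (fiter n a) (fiter n b).
Proof. intro H. induction n as [|n IH]; simpl; auto. Qed.

Lemma chain_shadow delta k a b :
  delta <= h -> chain X d f delta k a b -> E (fiter k a) b.
Proof.
  intros Hdelta [_ [c [<- [<- Hstep]]]].
  enough (Hi : forall i, (i <= k)%nat -> E (fiter i (c O)) (c i)) by (apply Hi; lia).
  induction i as [|i IH]; intro Hi; [reflexivity|].
  transitivity (f (c i)).
  - apply E_invariant, IH. lia.
  - apply E_close. specialize (Hstep i ltac:(lia)). lra.
Qed.

Section ReturnTimes.
Variable x : X.

Definition return_time (n : nat) : Prop := E x (fiter n x).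

Lemma return_time_add a b : return_time a -> return_time b -> return_time (a + b).
Proof.
  intros Ha Hb. unfold return_time. transitivity (fiter a x); auto.
  rewrite iter_add. apply E_iter, Hb.
Qed.

Lemma return_time_sub a b :
  return_time a -> return_time b -> (b <= a)%nat -> return_time (a - b).
Proof.
  intros Ha Hb Hab. unfold return_time.
  assert (Hshift : E (fiter (a - b) x) (fiter a x)).
  { replace a with (a - b + b)%nat at 2 by lia. rewrite iter_add.
    apply E_iter, Hb. }
  transitivity (fiter a x); auto. symmetry. exact Hshift.
Qed.

(* The length of every delta-cycle in the delta-chain component of x is a
   return time: travel from x to the cycle, around it, and back. *)
Lemma cycle_length_return_time delta K :
  delta <= h -> cycle_in X d f delta x K -> return_time K.
Proof.
  intros Hdelta [HK [c [Hclosed [Hstep Hcomp]]]].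
  set (y := c O).
  assert (Hloop : E (fiter K y) y).
  { apply (chain_shadow delta); auto. split; [exact HK|]. exists c. auto. }
  destruct (Hcomp O ltac:(lia)) as [[j Hxy] [j' Hyx]].
  pose proof (chain_shadow _ _ _ _ Hdelta Hxy) as Hto.
  pose proof (chain_shadow _ _ _ _ Hdelta Hyx) as Hback.
  assert (Hround : return_time (j' + j)).
  { unfold return_time. rewrite iter_add. symmetry.
    transitivity (fiter j' y); auto. apply E_iter, Hto. }
  assert (Hround_loop : return_time (j' + (K + j))).
  { unfold return_time. rewrite !iter_add. symmetry.
    transitivity (fiter j' y); auto. apply E_iter.
    transitivity (fiter K y); auto. apply E_iter, Hto. }
  replace K with (j' + (K + j) - (j' + j))%nat by lia.
  apply return_time_sub; auto. lia.
Qed.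

End ReturnTimes.

Lemma cyclic_equiv_related delta x y :
  delta <= h -> cyclic_equiv X d f delta x y -> E x y.
Proof.
  intros Hdelta [_ [m [[_ Hgcd] [k [Hk Hmk]]]]].
  destruct (nat_subgroup_multiples (return_time x))
    as [p Hp]; [red; reflexivity|apply return_time_add|apply return_time_sub|].
  assert (Hpm : Nat.divide p m).
  { apply Hgcd. intros K HK. apply Hp.
    apply (cycle_length_return_time x delta); auto. }
  assert (Hret : return_time x k) by (apply Hp; eapply Nat.divide_trans; eauto).
  transitivity (fiter k x); [exact Hret|]. apply (chain_shadow delta); auto.
Qed.

End Dynamics.

Theorem lemma4p2 (X : Type) (d : X -> X -> R) (f g : X -> X)
  (hmet : is_metric X d) (hcpt : is_compact X d) (hdim : zero_dim X d)
  (hhomeo : homeo_with_inverse X d f g) (heq : equicontinuous X d f g)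
  (r : R -> R) (hr : forall delta, 0 < delta -> is_r X d f delta (r delta)) :
  limit1_in r (fun delta => 0 < delta) 0 0.
Proof.
  intros eps Heps.
  destruct (fine_clopen_partition X d hmet hcpt hdim (eps / 2))
    as (S & HS & Hcell & lam & Hlam & Hleb); [lra|].
  destruct (equicontinuous_forward X d f g heq lam Hlam) as [h [Hh Hforward]].
  set (E := orbit_rel X f S).
  assert (E_close : forall a b, d a b <= h -> E a b)
    by (intros a b Hab n; apply Hleb, Hforward, Hab).
  exists h. split; [exact Hh|].
  intros delta [Hdelta Hsmall]. simpl in *. unfold R_dist in *.
  rewrite Rminus_0_r, Rabs_right in Hsmall by lra. rewrite Rminus_0_r.
  assert (Hr : 0 <= r delta <= eps / 2).
  { apply (lub_between _ _ _ (hr delta Hdelta)).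
    intros v [x [y [Hxy ->]]]. split; [apply dist_nonneg, hmet|].
    assert (Hrel : E x y).
    { apply (cyclic_equiv_related X d f E (orbit_rel_equivalence X f S HS)
               (orbit_rel_invariant X f S) h E_close delta); auto; lra. }
    left. apply Hcell, (Hrel O). }
  rewrite Rabs_right; lra.
Qed.
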